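(* Let $\mathbb X$ be a basic space and $\mathcal D=(D,<,\rho)$ a computable partially ordered set. 1. Every $F\in\mathrm{Max}_{\mathrm{PR}}[\mathbb X\to\mathcal D]$ is of the form $F=\max^{\mathcal D}f$ for some partial computable $f:\mathbb X\times\mathbb N\to D$, monotone increasing in its second argument, such that $\mathrm{dom}(f)=Z\times\mathbb N$ for some $\Sigma^0_1$ (computably enumerable) set $Z\subseteq\mathbb X$. 2. If moreover $F\in\mathrm{Max}_{\mathrm{PR}}[\mathbb X\to\mathcal D]$ has $\Sigma^0_1$ domain, then one can take $Z=\mathrm{dom}(F)$.
   Context: A basic space is a finite non-empty product of sets each of which is $\mathbb N$, $\mathbb Z$, or $A^*$ for some finite alphabet $A$. A computable partially ordered set is a triple $\mathcal D=(D,<,\rho)$ where $\rho:\mathbb N\to D$ is a bijection and $<$ is a strict partial order on $D$ with $\{(m,n):\rho(m)<\rho(n)\}$ computable; a partial function into $D$ is partial computable if its composition with $\rho^{-1}$ is. For a partial $f:\mathbb X\times\mathbb N\to D$ monotone increasing in its second argument on its domain, $\max^{\mathcal D}f$ is the partial function defined exactly at those $x$ for which $\{f(x,t):t,\ f(x,t)\text{ defined}\}$ is finite and non-empty, with value its maximum element. $\mathrm{Max}_{\mathrm{PR}}[\mathbb X\to\mathcal D]$ is the class of all $\max^{\mathcal D}f$ with $f$ partial computable and monotone increasing in its second argument. *)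

From mathcomp Require Import all_boot ssralg ssrint.
Set Implicit Arguments. Unset Strict Implicit. Unset Printing Implicit Defensive.

Inductive rec : Type :=
| rZero | rSucc | rProj (i : nat) | rComp (f : rec) (gs : list rec)
| rPrim (f g : rec) | rMu (f : rec).

Inductive eval : rec -> list nat -> nat -> Prop :=
| eZero xs : eval rZero xs 0
| eSucc x xs : eval rSucc (x :: xs) x.+1
| eProj i xs : eval (rProj i) xs (nth 0 xs i)
| eComp f gs xs ys v : evals gs xs ys -> eval f ys v -> eval (rComp f gs) xs v
| ePrim0 f g xs v : eval f xs v -> eval (rPrim f g) (0 :: xs) v
| ePrimS f g n xs w v : eval (rPrim f g) (n :: xs) w ->
    eval g (n :: w :: xs) v -> eval (rPrim f g) (n.+1 :: xs) v
| eMu f xs n : eval f (n :: xs) 0 ->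
    (forall m, m < n -> exists k, eval f (m :: xs) k.+1) -> eval (rMu f) xs n
with evals : list rec -> list nat -> list nat -> Prop :=
| esNil xs : evals [::] xs [::]
| esCons g gs xs y ys : eval g xs y -> evals gs xs ys -> evals (g :: gs) xs (y :: ys).

(* basic spaces: finite non-empty products of N, Z, A^* (A finite)    *)
Inductive bcomp := CN | CZ | CW (k : nat).

Definition ctype (c : bcomp) : Type :=
  match c with CN => nat | CZ => int | CW k => seq 'I_k end.

Definition cantor (a b : nat) : nat := (a + b) * (a + b).+1 %/ 2 + b.

Definition code_int (z : int) : nat :=
  match z with Posz n => n.*2 | Negz n => n.*2.+1 end.

(* bijective base-k numeration *)
Fixpoint code_word k (w : seq 'I_k) : nat :=
  match w with [::] => 0 | a :: w' => (nat_of_ord a).+1 + k * code_word w' end.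

Definition ccode (c : bcomp) : ctype c -> nat :=
  match c return ctype c -> nat with
  | CN => fun n => n | CZ => code_int | CW k => @code_word k end.

Fixpoint btype (c : bcomp) (cs : seq bcomp) : Type :=
  match cs with [::] => ctype c | c' :: cs' => (ctype c * btype c' cs')%type end.

Fixpoint bcode (c : bcomp) (cs : seq bcomp) : btype c cs -> nat :=
  match cs return btype c cs -> nat with
  | [::] => ccode (c := c)
  | c' :: cs' => fun x => cantor (ccode x.1) (bcode x.2)
  end.

Definition is_comp_poset (D : Type) (lt : D -> D -> Prop) (rho : nat -> D) : Prop :=
  [/\ (forall x, ~ lt x x),
      (forall x y z, lt x y -> lt y z -> lt x z),
      bijective rho &
      exists p : rec, forall m n,
        (eval p [:: m; n] 1 <-> lt (rho m) (rho n)) /\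
        (eval p [:: m; n] 0 <-> ~ lt (rho m) (rho n))].

Definition leD (D : Type) (lt : D -> D -> Prop) (x y : D) : Prop := lt x y \/ x = y.

(* propositional list membership (D has no decidable equality) *)
Fixpoint inl (D : Type) (e : D) (l : list D) : Prop :=
  match l with [::] => False | a :: l' => a = e \/ inl e l' end.

(* partial functions are modelled as option-valued functions *)
Section Comp.
Variables (c : bcomp) (cs : seq bcomp) (D : Type) (lt : D -> D -> Prop) (rho : nat -> D).
Local Notation X := (btype c cs).

Definition pcomp2 (f : X -> nat -> option D) : Prop :=
  exists p : rec, forall x t n, eval p [:: bcode x; t] n <-> f x t = Some (rho n).

Definition sigma01 (Z : X -> Prop) : Prop :=
  exists p : rec, forall x, Z x <-> exists v, eval p [:: bcode x] v.

Definition mono2 (f : X -> nat -> option D) : Prop :=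
  forall x t t' d d', t <= t' -> f x t = Some d -> f x t' = Some d' -> leD lt d d'.

Definition vals (f : X -> nat -> option D) (x : X) (d : D) : Prop :=
  exists t, f x t = Some d.

Definition is_maxD (f : X -> nat -> option D) (F : X -> option D) : Prop :=
  forall x d, F x = Some d <->
    [/\ exists l : list D, forall e, vals f x e -> inl e l,
        vals f x d &
        forall e, vals f x e -> leD lt e d].

Definition MaxPR (F : X -> option D) : Prop :=
  exists f, [/\ pcomp2 f, mono2 f & is_maxD f F].
End Comp.

From mathcomp Require Import all_boot ssralg ssrint.
From Stdlib Require Import ClassicalEpsilon.
Set Implicit Arguments. Unset Strict Implicit. Unset Printing Implicit Defensive.

(* Let [p] compute [f].  Running [p] under a clock [k], which cuts every
   unbounded search off after [k] candidates, is a total operation, and it is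
   computable without unbounded search.  So the following "stage value" is
   computable: at stage [k], the value [f x s] for the largest [s <= k] whose
   computation halts under clock [k].  Since [f] is monotone in [s], stage
   values grow with [k], and every value of [f x] is dominated by a stage
   value.  Hence the stage values of [x], counted from the first stage that
   has one, form a monotone sequence, total on the c.e. set of [x] having some
   stage value, with the same maximum as [f x].  For the second part,
   restrict this sequence to the c.e. set [dom F], which lies inside that
   set. *)

Fixpoint all_rec (P : rec -> Prop) (gs : seq rec) : Prop :=
  if gs is g :: gs' then P g /\ all_rec P gs' else True.

Lemma all_rec_sub (P Q : rec -> Prop) gs :
  (forall g, P g -> Q g) -> all_rec P gs -> all_rec Q gs.
Proof. by move=> PQ; elim: gs => //= g gs IH [/PQ Qg /IH]. Qed.

Section RecNestedInd.
Variable P : rec -> Prop.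
Hypotheses (P_zero : P rZero) (P_succ : P rSucc) (P_proj : forall i, P (rProj i))
  (P_comp : forall f gs, P f -> all_rec P gs -> P (rComp f gs))
  (P_prim : forall f g, P f -> P g -> P (rPrim f g))
  (P_mu : forall f, P f -> P (rMu f)).

Fixpoint rec_nested_ind (p : rec) : P p :=
  match p with
  | rZero => P_zero | rSucc => P_succ | rProj i => P_proj i
  | rComp f gs => P_comp (rec_nested_ind f)
      ((fix all_ind gs : all_rec P gs :=
          if gs is g :: gs' then conj (rec_nested_ind g) (all_ind gs') else I) gs)
  | rPrim f g => P_prim (rec_nested_ind f) (rec_nested_ind g)
  | rMu f => P_mu (rec_nested_ind f)
  end.
End RecNestedInd.

Lemma eval_zero_inv xs v : eval rZero xs v -> v = 0.
Proof. by move=> H; inversion H. Qed.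
Lemma eval_succ_inv xs v : eval rSucc xs v -> exists x xs', xs = x :: xs' /\ v = x.+1.
Proof. by move=> H; inversion H; eauto. Qed.
Lemma eval_proj_inv i xs v : eval (rProj i) xs v -> v = nth 0 xs i.
Proof. by move=> H; inversion H. Qed.
Lemma eval_comp_inv f gs xs v : eval (rComp f gs) xs v ->
  exists ys, evals gs xs ys /\ eval f ys v.
Proof. by move=> H; inversion H; eauto. Qed.
Lemma eval_prim_nil f g v : ~ eval (rPrim f g) [::] v.
Proof. by move=> H; inversion H. Qed.
Lemma eval_prim0_inv f g xs v : eval (rPrim f g) (0 :: xs) v -> eval f xs v.
Proof. by move=> H; inversion H. Qed.
Lemma eval_primS_inv f g n xs v : eval (rPrim f g) (n.+1 :: xs) v ->
  exists w, eval (rPrim f g) (n :: xs) w /\ eval g (n :: w :: xs) v.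
Proof. by move=> H; inversion H; eauto. Qed.
Lemma eval_mu_inv f xs n : eval (rMu f) xs n ->
  eval f (n :: xs) 0 /\ (forall m, m < n -> exists k, eval f (m :: xs) k.+1).
Proof. by move=> H; inversion H. Qed.
Lemma evals_nil_inv xs ys : evals [::] xs ys -> ys = [::].
Proof. by move=> H; inversion H. Qed.
Lemma evals_cons_inv g gs xs ys : evals (g :: gs) xs ys ->
  exists y ys', [/\ ys = y :: ys', eval g xs y & evals gs xs ys'].
Proof. by move=> H; inversion H; exists y, ys0. Qed.

Lemma evals2_inv g1 g2 xs ys : evals [:: g1; g2] xs ys ->
  exists y1 y2, [/\ ys = [:: y1; y2], eval g1 xs y1 & eval g2 xs y2].
Proof.
case/evals_cons_inv => y1 [ys1 [-> H1 /evals_cons_inv [y2 [ys2 [-> H2 /evals_nil_inv ->]]]]].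
by exists y1, y2.
Qed.

Lemma eval_functional p : forall xs v w, eval p xs v -> eval p xs w -> v = w.
Proof.
elim/rec_nested_ind: p.
- by move=> xs v w /eval_zero_inv -> /eval_zero_inv ->.
- by move=> xs v w /eval_succ_inv [x [xs' [-> ->]]] /eval_succ_inv [y [ys [[-> _] ->]]].
- by move=> i xs v w /eval_proj_inv -> /eval_proj_inv ->.
- move=> f gs IHf IHgs xs v w /eval_comp_inv [ys [Eys Hv]] /eval_comp_inv [ys' [Eys' Hw]].
  suff E : ys = ys' by subst; exact: IHf Hv Hw.
  elim: gs IHgs ys ys' Eys Eys' {Hv Hw} => [|g gs IH] /= IHgs ys ys' Eys Eys'.
    by rewrite (evals_nil_inv Eys) (evals_nil_inv Eys').
  case: IHgs => IHg IHgs.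
  case/evals_cons_inv: Eys => y [zs [-> Hy Hzs]].
  case/evals_cons_inv: Eys' => y' [zs' [-> Hy' Hzs']].
  by rewrite (IHg _ _ _ Hy Hy') (IH IHgs _ _ Hzs Hzs').
- move=> f g IHf IHg [|a xs] v w Hv Hw; first by case: (eval_prim_nil Hv).
  elim: a v w Hv Hw => [|a IH] v w Hv Hw.
    exact: IHf (eval_prim0_inv Hv) (eval_prim0_inv Hw).
  case/eval_primS_inv: Hv => u [Hu Hv]; case/eval_primS_inv: Hw => u' [Hu' Hw].
  by rewrite (IH _ _ Hu Hu') in Hv; exact: IHg Hv Hw.
- move=> f IHf xs v w /eval_mu_inv [Hv0 Hv_pos] /eval_mu_inv [Hw0 Hw_pos].
  case: (ltngtP v w) => // ltvw.
  + by case: (Hw_pos _ ltvw) => k Hk; have := IHf _ _ _ Hv0 Hk.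
  + by case: (Hv_pos _ ltvw) => k Hk; have := IHf _ _ _ Hw0 Hk.
Qed.

Lemma evals_functional gs xs ys ys' : evals gs xs ys -> evals gs xs ys' -> ys = ys'.
Proof.
elim: gs ys ys' => [|g gs IH] ys ys'; first by move=> /evals_nil_inv -> /evals_nil_inv ->.
case/evals_cons_inv=> y [zs [-> Hy Hzs]] /evals_cons_inv [y' [zs' [-> Hy' Hzs']]].
by rewrite (eval_functional Hy Hy') (IH _ _ Hzs Hzs').
Qed.

(** * A clocked interpreter *)

Fixpoint seq_of_options (l : seq (option nat)) : option (seq nat) :=
  match l with
  | [::] => Some [::]
  | o :: l' => if (o, seq_of_options l') is (Some x, Some ys) then Some (x :: ys) else None
  end.

Lemma seq_of_options_cons o l ys : seq_of_options (o :: l) = Some ys ->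
  exists y ys', [/\ ys = y :: ys', o = Some y & seq_of_options l = Some ys'].
Proof. by case: o => [y|] //=; case: (seq_of_options l) => [ys'|] // [<-]; exists y, ys'. Qed.

Fixpoint iter_partial (F : option nat) (G : nat -> nat -> option nat) (a : nat) :=
  if a is j.+1 then obind (G j) (iter_partial F G j) else F.

(* State of the unbounded search for the least zero of [h] after inspecting
   [0, k): [0] = still searching, [1] = stuck on an undefined value,
   [m.+2] = the least zero is [m]. *)
Definition mu_step (h : nat -> option nat) (m s : nat) : nat :=
  if s is 0 then (if h m is Some w then (if w is 0 then m.+2 else 0) else 1) else s.
Fixpoint mu_search h k := if k is k'.+1 then mu_step h k' (mu_search h k') else 0.

Definition least_zero (h : nat -> option nat) v :=
  h v = Some 0 /\ forall m, m < v -> exists w, h m = Some w.+1.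

Lemma mu_search_searching h k :
  mu_search h k = 0 <-> forall m, m < k -> exists w, h m = Some w.+1.
Proof.
elim: k => [|k IH] /=; first by split.
rewrite /mu_step; case: (mu_search h k) IH => [|s] IH; last first.
  by split=> // Hpos; apply: IH.2 => m /ltnW; exact: Hpos.
case Eh: (h k) => [[|w]|]; split=> //.
- by case/(_ k (ltnSn k)) => w; rewrite Eh.
- move=> _ m; rewrite ltnS leq_eqVlt => /orP [/eqP ->|]; first by exists w.
  exact: IH.1 erefl m.
- by case/(_ k (ltnSn k)) => w; rewrite Eh.
Qed.

Lemma mu_search_stable h k k' s : k <= k' -> mu_search h k = s.+1 -> mu_search h k' = s.+1.
Proof.
move=> lekk' Hs; elim: k' lekk' => [|k' IH]; first by rewrite leqn0 => /eqP E; subst.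
by rewrite leq_eqVlt ltnS => /orP [/eqP <- //|/IH /= ->].
Qed.

Lemma mu_search_found h k v : mu_search h k = v.+2 <-> v < k /\ least_zero h v.
Proof.
split.
- elim: k => //= k IH; rewrite /mu_step.
  case E: (mu_search h k) => [|[|s]] //; last first.
    by move=> Es; rewrite -Es in IH; case: (IH E) => ltvk Hv; split=> //; exact: ltnW.
  case Eh: (h k) => [[|w]|] // [<-]; split=> //; split=> //.
  exact/mu_search_searching.
- case=> ltvk [Hv0 /mu_search_searching Hv_pos].
  by apply: (mu_search_stable ltvk); rewrite /= Hv_pos /mu_step Hv0.
Qed.

Fixpoint run (k : nat) (p : rec) (xs : seq nat) {struct p} : option nat :=
  match p with
  | rZero => Some 0
  | rSucc => if xs is x :: _ then Some x.+1 else None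
  | rProj i => Some (nth 0 xs i)
  | rComp f gs => obind (run k f) (seq_of_options (map (fun g => run k g xs) gs))
  | rPrim f g => if xs is a :: xs' then
       iter_partial (run k f xs') (fun j w => run k g (j :: w :: xs')) a else None
  | rMu f => if mu_search (fun m => run k f (m :: xs)) k is s.+2 then Some s else None
  end.

Lemma run_monotone p : forall k k' xs v, k <= k' -> run k p xs = Some v -> run k' p xs = Some v.
Proof.
elim/rec_nested_ind: p => //.
- move=> f gs IHf IHgs k k' xs v lekk' /=.
  case E: (seq_of_options _) => [ys|] //= Hf.
  suff -> : seq_of_options (map (fun g => run k' g xs) gs) = Some ys by exact: IHf Hf.
  elim: gs IHgs ys E {Hf} => [|g gs IH] /= IHgs ys; first by case=> <-.
  case: IHgs => IHg IHgs /seq_of_options_cons [y [ys' [-> Hy Hys]]].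
  by rewrite (IHg _ _ _ _ lekk' Hy) (IH IHgs _ Hys).
- move=> f g IHf IHg k k' [|a xs] v lekk' //=.
  elim: a v => [|a IH] v /=; first exact: IHf.
  case E: (iter_partial _ _ a) => [w|] //= Hg.
  by rewrite (IH _ E) /=; apply: IHg lekk' Hg.
- move=> f IHf k k' xs v lekk' /=.
  case E: (mu_search _ k) => [|[|s]] // [<-].
  case/mu_search_found: E => ltsk [Hs0 Hs_pos].
  suff /mu_search_found -> : s < k' /\ least_zero (fun m => run k' f (m :: xs)) s by [].
  split; first exact: leq_trans ltsk lekk'.
  split; first exact: IHf Hs0.
  by move=> m ltms; case: (Hs_pos m ltms) => w Hw; exists w; exact: IHf Hw.
Qed.

Lemma run_all_monotone gs k k' xs ys : k <= k' ->
  seq_of_options (map (fun g => run k g xs) gs) = Some ys ->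
  seq_of_options (map (fun g => run k' g xs) gs) = Some ys.
Proof.
move=> lekk'; elim: gs ys => [|g gs IH] //= ys /seq_of_options_cons [y [ys' [-> Hy Hys]]].
by rewrite (run_monotone lekk' Hy) (IH _ Hys).
Qed.

Lemma run_sound p : forall k xs v, run k p xs = Some v -> eval p xs v.
Proof.
elim/rec_nested_ind: p.
- by move=> k xs v [<-]; constructor.
- by move=> k [|x xs] v //= [<-]; constructor.
- by move=> i k xs v [<-]; constructor.
- move=> f gs IHf IHgs k xs v /=.
  case E: (seq_of_options _) => [ys|] //= Hf.
  apply: (eComp (ys := ys)); last exact: IHf Hf.
  elim: gs IHgs ys E {Hf} => [|g gs IH] /= IHgs ys; first by case=> <-; constructor.
  case: IHgs => IHg IHgs /seq_of_options_cons [y [ys' [-> Hy Hys]]].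
  by constructor; [exact: IHg Hy | exact: IH].
- move=> f g IHf IHg k [|a xs] v //=.
  elim: a v => [|a IH] v /=; first by move=> H; constructor; exact: IHf H.
  case E: (iter_partial _ _ a) => [w|] //= Hg.
  by apply: (ePrimS (w := w)); [exact: IH | exact: IHg Hg].
- move=> f IHf k xs v /=.
  case E: (mu_search _ k) => [|[|s]] // [<-].
  case/mu_search_found: E => _ [Hs0 Hs_pos].
  constructor; first exact: IHf Hs0.
  by move=> m ltms; case: (Hs_pos m ltms) => w Hw; exists w; exact: IHf Hw.
Qed.

Lemma uniform_bound (P : nat -> nat -> Prop) v :
  (forall m k k', k <= k' -> P m k -> P m k') ->
  (forall m, m < v -> exists k, P m k) -> exists K, forall m, m < v -> P m K.
Proof.
move=> P_mono; elim: v => [|v IH] HP; first by exists 0.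
case: IH => [m ltmv|K HK]; first exact/HP/ltnW.
case: (HP v (ltnSn v)) => k Hk; exists (maxn K k) => m.
rewrite ltnS leq_eqVlt => /orP [/eqP ->|ltmv].
  exact: P_mono (leq_maxr K k) Hk.
exact: P_mono (leq_maxl K k) (HK m ltmv).
Qed.

Lemma run_all_complete gs xs ys :
  all_rec (fun g => forall xs v, eval g xs v -> exists k, run k g xs = Some v) gs ->
  evals gs xs ys -> exists k, seq_of_options (map (fun g => run k g xs) gs) = Some ys.
Proof.
elim: gs ys => [|g gs IH] ys /=; first by move=> _ /evals_nil_inv ->; exists 0.
case=> IHg IHgs /evals_cons_inv [y [ys' [-> Hy Hys]]].
case: (IHg _ _ Hy) => k1 Hk1; case: (IH _ IHgs Hys) => k2 Hk2; exists (maxn k1 k2).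
by rewrite (run_monotone (leq_maxl k1 k2) Hk1) /= (run_all_monotone (leq_maxr k1 k2) Hk2).
Qed.

Lemma run_mu_complete f xs v :
  (forall ys w, eval f ys w -> exists k, run k f ys = Some w) ->
  eval (rMu f) xs v -> exists k, run k (rMu f) xs = Some v.
Proof.
move=> IHf /eval_mu_inv [Hv0 Hv_pos]; case: (IHf _ _ Hv0) => k0 Hk0.
have [K HK] : exists K, forall m, m < v -> exists w, run K f (m :: xs) = Some w.+1.
  apply: (uniform_bound (P := fun m K => exists w, run K f (m :: xs) = Some w.+1)).
    by move=> m k k' lekk' [w Hw]; exists w; exact: run_monotone lekk' Hw.
  by move=> m ltmv; case: (Hv_pos m ltmv) => w /IHf [k Hk]; exists k, w.
pose k := maxn (maxn K k0) v.+1.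
have leKk : K <= k by rewrite /k !leq_max leqnn.
have lek0k : k0 <= k by rewrite /k !leq_max leqnn !orbT.
exists k => /=.
suff /mu_search_found -> : v < k /\ least_zero (fun m => run k f (m :: xs)) v by [].
split; first exact: leq_maxr.
split; first exact: run_monotone lek0k Hk0.
by move=> m ltmv; case: (HK m ltmv) => w Hw; exists w; exact: run_monotone leKk Hw.
Qed.

Lemma run_complete p : forall xs v, eval p xs v -> exists k, run k p xs = Some v.
Proof.
elim/rec_nested_ind: p.
- by move=> xs v /eval_zero_inv ->; exists 0.
- by move=> xs v /eval_succ_inv [x [xs' [-> ->]]]; exists 0.
- by move=> i xs v /eval_proj_inv ->; exists 0.
- move=> f gs IHf IHgs xs v /eval_comp_inv [ys [/(run_all_complete IHgs) [k1 Hk1] Hv]].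
  case: (IHf _ _ Hv) => k2 Hk2; exists (maxn k1 k2) => /=.
  by rewrite (run_all_monotone (leq_maxl k1 k2) Hk1) /= (run_monotone (leq_maxr k1 k2) Hk2).
- move=> f g IHf IHg [|a xs] v H; first by case: (eval_prim_nil H).
  elim: a v H => [|a IH] v H.
    by case: (IHf _ _ (eval_prim0_inv H)) => k Hk; exists k.
  case/eval_primS_inv: H => w [Hw Hv].
  case: (IH _ Hw) => k1 Hk1; case: (IHg _ _ Hv) => k2 Hk2.
  exists (maxn k1 k2) => /=.
  have /= -> := run_monotone (leq_maxl k1 k2) Hk1.
  exact: run_monotone (leq_maxr k1 k2) Hk2.
- by move=> f IHf xs v; exact: run_mu_complete.
Qed.

(** * Total programs *)

Definition computes (p : rec) (F : seq nat -> nat) := forall xs, eval p xs (F xs).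
Definition computes_all (gs : seq rec) (G : seq nat -> seq nat) :=
  forall xs, evals gs xs (G xs).

Lemma computes_ext p F F' : computes p F -> F =1 F' -> computes p F'.
Proof. by move=> Hp E xs; rewrite -E. Qed.

Lemma computes_zero : computes rZero (fun _ => 0).
Proof. by move=> xs; constructor. Qed.

Lemma computes_proj i : computes (rProj i) (nth 0 ^~ i).
Proof. by move=> xs; constructor. Qed.

Lemma computes_comp f F gs G :
  computes f F -> computes_all gs G -> computes (rComp f gs) (F \o G).
Proof. by move=> Hf Hgs xs; apply: eComp (Hgs xs) (Hf _). Qed.

Lemma computes_all_nil : computes_all [::] (fun _ => [::]).
Proof. by move=> xs; constructor. Qed.

Lemma computes_all_cons g G gs Gs : computes g G -> computes_all gs Gs ->
  computes_all (g :: gs) (fun xs => G xs :: Gs xs).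
Proof. by move=> Hg Hgs xs; constructor. Qed.

Lemma computes_all_cons_inv g gs G : computes_all (g :: gs) G ->
  computes g (head 0 \o G) /\ computes_all gs (behead \o G).
Proof.
move=> Hgs; split=> xs; case/evals_cons_inv: (Hgs xs) => y [ys [/= -> Hy Hys]] //.
Qed.

Lemma computes_all_map (h : rec -> rec) (H : rec -> seq nat -> nat) gs :
  all_rec (fun g => computes (h g) (H g)) gs ->
  computes_all (map h gs) (fun xs => [seq H g xs | g <- gs]).
Proof.
elim: gs => [|g gs IH] /=; first by move=> _; exact: computes_all_nil.
by case=> Hg /IH; exact: computes_all_cons.
Qed.

Fixpoint prim_rec (F G : seq nat -> nat) a xs :=
  if a is j.+1 then G (j :: prim_rec F G j xs :: xs) else F xs.

Lemma eval_prim_rec f g F G : computes f F -> computes g G ->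
  forall a xs, eval (rPrim f g) (a :: xs) (prim_rec F G a xs).
Proof.
move=> Hf Hg; elim=> [|a IH] xs /=; first by constructor.
exact: ePrimS (IH xs) (Hg _).
Qed.

Lemma computes_comp_prim f g F G h H hs Hs : computes f F -> computes g G ->
  computes h H -> computes_all hs Hs ->
  computes (rComp (rPrim f g) (h :: hs)) (fun xs => prim_rec F G (H xs) (Hs xs)).
Proof.
move=> Hf Hg Hh Hhs xs.
exact: eComp (computes_all_cons Hh Hhs xs) (eval_prim_rec Hf Hg _ _).
Qed.

Definition succ_of g := rComp rSucc [:: g].
Lemma computes_succ_of g G : computes g G -> computes (succ_of g) (fun xs => (G xs).+1).
Proof.
by move=> Hg xs; apply: eComp (computes_all_cons Hg computes_all_nil xs) (eSucc _ _).
Qed.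

Fixpoint const_prog n := if n is m.+1 then succ_of (const_prog m) else rZero.
Lemma computes_const n : computes (const_prog n) (fun _ => n).
Proof. by elim: n => [|n IH] /=; [exact: computes_zero | exact: computes_succ_of]. Qed.

Definition pred_of c := rComp (rPrim rZero (rProj 0)) [:: c].
Lemma computes_pred_of c C : computes c C -> computes (pred_of c) (fun xs => (C xs).-1).
Proof.
move=> Hc; apply: computes_ext (computes_comp_prim computes_zero (computes_proj 0) Hc
  computes_all_nil) _.
by move=> xs /=; case: (C xs).
Qed.

Lemma computes_all_pred_of cs C : computes_all cs C ->
  computes_all (map pred_of cs) (fun xs => map predn (C xs)).
Proof.
elim: cs C => [|c cs IH] C Hcs /=.
  by move=> xs; rewrite (evals_nil_inv (Hcs xs)); constructor.
case/computes_all_cons_inv: (Hcs) => /computes_pred_of Hc /IH Hpreds xs.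
move: (computes_all_cons Hc Hpreds xs) => /=.
by case/evals_cons_inv: (Hcs xs) => y [ys [-> _ _]].
Qed.

Definition guard c a := rComp (rPrim rZero (rProj 2)) [:: c; a].
Lemma computes_guard c a C A : computes c C -> computes a A ->
  computes (guard c a) (fun xs => if C xs is 0 then 0 else A xs).
Proof.
move=> Hc Ha; apply: computes_ext (computes_comp_prim computes_zero (computes_proj 2) Hc
  (computes_all_cons Ha computes_all_nil)) _.
by move=> xs /=; case: (C xs).
Qed.

Definition ifz c a b := rComp (rPrim (rProj 0) (rProj 3)) [:: c; a; b].
Lemma computes_ifz c a b C A B : computes c C -> computes a A -> computes b B ->
  computes (ifz c a b) (fun xs => if C xs is 0 then A xs else B xs).
Proof.
move=> Hc Ha Hb; apply: computes_ext (computes_comp_prim (computes_proj 0) (computes_proj 3) Hc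
  (computes_all_cons Ha (computes_all_cons Hb computes_all_nil))) _.
by move=> xs /=; case: (C xs).
Qed.

Definition guards cs body := foldr guard body cs.
Lemma computes_guards cs C body B : computes_all cs C -> computes body B ->
  computes (guards cs body) (fun xs => if all (fun c => c != 0) (C xs) then B xs else 0).
Proof.
elim: cs C => [|c cs IH] C Hcs Hbody /=.
  by apply: (computes_ext Hbody) => xs; rewrite (evals_nil_inv (Hcs xs)).
case/computes_all_cons_inv: (Hcs) => Hc /IH /(_ Hbody) Hguards.
apply: (computes_ext (computes_guard Hc Hguards)) => xs /=.
by case/evals_cons_inv: (Hcs xs) => y [ys [-> _ _]]; case: y.
Qed.

Definition slice i n (ys : seq nat) := [seq nth 0 ys j | j <- iota i n].
Arguments slice : simpl never.

Lemma slice_succ i n ys : slice i n.+1 ys = nth 0 ys i :: slice i.+1 n ys.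
Proof. by []. Qed.

Definition projs i n := [seq rProj j | j <- iota i n].

Lemma computes_projs i n : computes_all (projs i n) (slice i n).
Proof.
elim: n i => [|n IH] i; first exact: computes_all_nil.
exact: computes_all_cons (computes_proj i) (IH i.+1).
Qed.

Lemma size_slice i n ys : size (slice i n ys) = n.
Proof. by rewrite size_map size_iota. Qed.

Lemma slice_cons k xs i n : slice i.+1 n (k :: xs) = slice i n xs.
Proof. by elim: n i => [|n IH] i //; rewrite !slice_succ IH. Qed.

Lemma slice_full xs : slice 0 (size xs) xs = xs.
Proof. by rewrite /slice /= -/(mkseq _ _) mkseq_nth. Qed.

Lemma slice_tail k xs n : size xs = n -> slice 1 n (k :: xs) = xs.
Proof. by move=> <-; rewrite slice_cons slice_full. Qed.

Lemma nth_slice i n ys j : nth 0 (slice i n ys) j = if j < n then nth 0 ys (i + j) else 0.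
Proof.
case: ifP => ltjn; first by rewrite (nth_map 0) ?size_iota // nth_iota.
by rewrite nth_default // size_slice leqNgt ltjn.
Qed.

Lemma eval_comp_partial f F g gs Gs xs v :
  (forall y, eval f (y :: Gs xs) (F y)) -> computes_all gs Gs ->
  eval (rComp f (g :: gs)) xs v <-> exists2 y, eval g xs y & v = F y.
Proof.
move=> Hf Hgs; split.
- case/eval_comp_inv => ys [/evals_cons_inv [y [ys' [-> Hy Hys']]] Hv].
  exists y => //; rewrite (evals_functional Hys' (Hgs xs)) in Hv.
  exact: eval_functional Hv (Hf y).
- by case=> y Hy ->; exact: eComp (esCons Hy (Hgs xs)) (Hf y).
Qed.

Lemma eval_mu_total f F xs v : computes f F ->
  eval (rMu f) xs v <-> F (v :: xs) = 0 /\ forall m, m < v -> F (m :: xs) != 0.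
Proof.
move=> Hf; split.
- case/eval_mu_inv => Hv Hpos; split; first exact: eval_functional (Hf _) Hv.
  by move=> m /Hpos [w Hw]; rewrite (eval_functional (Hf _) Hw).
- case=> Hv Hpos; constructor; first by rewrite -Hv.
  by move=> m /Hpos; case E: (F _) => [|w] // _; exists w; rewrite -E.
Qed.

Lemma eval_pred_of c xs v : eval (pred_of c) xs v <-> exists2 y, eval c xs y & v = y.-1.
Proof.
rewrite (@eval_comp_partial _ predn _ _ (fun _ => [::])) //; last exact: computes_all_nil.
by move=> y; have := eval_prim_rec computes_zero (computes_proj 0) y [::]; case: y.
Qed.

Definition add_prog := rPrim (rProj 0) (succ_of (rProj 1)).

Lemma eval_add_prog y t : eval add_prog [:: y; t] (y + t).
Proof.
have := eval_prim_rec (computes_proj 0) (computes_succ_of (computes_proj 1)) y [:: t].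
by congr eval; elim: y => //= y ->.
Qed.

(** * Compiling the clocked interpreter *)

Definition encode_opt (o : option nat) := if o is Some v then v.+1 else 0.

Lemma seq_of_options_encode os : seq_of_options os =
  if all (fun o => encode_opt o != 0) os then Some (map (predn \o encode_opt) os) else None.
Proof. by elim: os => [|[v|] os IH] //=; rewrite IH; case: (all _ _). Qed.

(* A compiled program reads the clock [k] in front of the arguments [xs]; the
   arity [n] of [xs] is fixed at compile time. *)
Definition clocked_run p n ys := encode_opt (run (nth 0 ys 0) p (slice 1 n ys)).

Lemma clocked_run_cons p n k xs : size xs = n ->
  clocked_run p n (k :: xs) = encode_opt (run k p xs).
Proof. by move=> Hxs; rewrite /clocked_run slice_tail. Qed.

Definition clock_comp (Tf : rec) (Tgs : seq rec) :=
  guards Tgs (rComp Tf (rProj 0 :: map pred_of Tgs)).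

Lemma computes_clock_comp f gs n Tf Tgs :
  computes Tf (clocked_run f (size gs)) ->
  computes_all Tgs (fun ys => [seq clocked_run g n ys | g <- gs]) ->
  computes (clock_comp Tf Tgs) (clocked_run (rComp f gs) n).
Proof.
move=> Hf Hgs.
have Hbody := computes_comp Hf (computes_all_cons (computes_proj 0) (computes_all_pred_of Hgs)).
apply: (computes_ext (computes_guards Hgs Hbody)) => ys /=.
rewrite /clocked_run /= seq_of_options_encode !all_map -!map_comp.
case: ifP => //= _; rewrite slice_tail //.
by rewrite size_map.
Qed.

Definition clock_prim (Tf Tg : rec) n :=
  rComp (rPrim Tf (guard (rProj 1)
           (rComp Tg (rProj 2 :: rProj 0 :: pred_of (rProj 1) :: projs 3 n))))
        (rProj 1 :: rProj 0 :: projs 2 n).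

Lemma computes_clock_prim f g n Tf Tg :
  computes Tf (clocked_run f n) -> computes Tg (clocked_run g n.+2) ->
  computes (clock_prim Tf Tg n) (clocked_run (rPrim f g) n.+1).
Proof.
move=> Hf Hg.
have Hstep := computes_guard (computes_proj 1) (computes_comp Hg
  (computes_all_cons (computes_proj 2) (computes_all_cons (computes_proj 0)
    (computes_all_cons (computes_pred_of (computes_proj 1)) (computes_projs 3 n))))).
apply: (computes_ext (computes_comp_prim Hf Hstep (computes_proj 1)
  (computes_all_cons (computes_proj 0) (computes_projs 2 n)))) => ys.
rewrite {3}/clocked_run slice_succ.
have : size (slice 2 n ys) = n by rewrite size_slice.
move: (slice 2 n ys) (nth 0 ys 0) (nth 0 ys 1) => xs k a Hxs /=.
elim: a => [|a IH] /=; first by rewrite clocked_run_cons.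
rewrite IH !slice_cons -Hxs slice_full Hxs.
by case: (iter_partial _ _ a) => [w|] //=; rewrite clocked_run_cons //= Hxs.
Qed.

(* Primitive recursion on the clock [k], with state as in [mu_step]. *)
Definition clock_mu_search (Tf : rec) n :=
  let r := rComp Tf (rProj 2 :: rProj 0 :: projs 3 n) in
  let found := ifz r (const_prog 1) (ifz (pred_of r) (succ_of (succ_of (rProj 0))) rZero) in
  rComp (rPrim rZero (ifz (rProj 1) found (rProj 1))) (rProj 0 :: rProj 0 :: projs 1 n).

Lemma computes_clock_mu_search f n Tf : computes Tf (clocked_run f n.+1) ->
  computes (clock_mu_search Tf n)
    (fun ys => mu_search (fun m => run (nth 0 ys 0) f (m :: slice 1 n ys)) (nth 0 ys 0)).
Proof.
move=> Hf.
have Hr := computes_comp Hf (computes_all_cons (computes_proj 2)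
  (computes_all_cons (computes_proj 0) (computes_projs 3 n))).
have Hfound := computes_ifz Hr (computes_const 1)
  (computes_ifz (computes_pred_of Hr) (computes_succ_of (computes_succ_of (computes_proj 0)))
    computes_zero).
apply: (computes_ext (computes_comp_prim computes_zero
  (computes_ifz (computes_proj 1) Hfound (computes_proj 1)) (computes_proj 0)
  (computes_all_cons (computes_proj 0) (computes_projs 1 n)))) => ys /=.
have : size (slice 1 n ys) = n by rewrite size_slice.
move: (slice 1 n ys) (nth 0 ys 0) => xs k Hxs.
set step := (X in prim_rec _ X _ _).
suff prim_mu m : prim_rec (fun _ => 0) step m (k :: xs) =
  mu_search (fun m => run k f (m :: xs)) m by exact: prim_mu.
elim: m => [|m IH] //=; rewrite IH /step.
case: (mu_search _ m) => [|s] //=.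
rewrite !slice_cons -Hxs slice_full Hxs clocked_run_cons /mu_step /=; last by rewrite Hxs.
by case: (run k f (m :: xs)) => [[|w]|].
Qed.

Definition clock_mu (Tf : rec) n :=
  let search := clock_mu_search Tf n in pred_of (guard (pred_of search) search).

Lemma computes_clock_mu f n Tf : computes Tf (clocked_run f n.+1) ->
  computes (clock_mu Tf n) (clocked_run (rMu f) n).
Proof.
move=> /computes_clock_mu_search Hsearch.
apply: (computes_ext (computes_pred_of (computes_guard (computes_pred_of Hsearch) Hsearch))).
by move=> ys; rewrite /clocked_run /=; case: (mu_search _ _) => [|[|s]].
Qed.

(* No [rMu] occurs in [clock p n]: each search of [p] becomes a primitive
   recursion on the clock. *)
Fixpoint clock (p : rec) (n : nat) {struct p} : rec :=
  match p with
  | rZero => const_prog 1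
  | rSucc => if n is _.+1 then succ_of (succ_of (rProj 1)) else rZero
  | rProj i => succ_of (if i < n then rProj i.+1 else rZero)
  | rComp f gs => clock_comp (clock f (size gs)) (map (fun g => clock g n) gs)
  | rPrim f g => if n is n'.+1 then clock_prim (clock f n') (clock g n'.+2) n' else rZero
  | rMu f => clock_mu (clock f n.+1) n
  end.

Lemma computes_clock p : forall n, computes (clock p n) (clocked_run p n).
Proof.
elim/rec_nested_ind: p.
- by move=> n; exact: computes_const.
- case=> [|n] /=; first exact: computes_zero.
  exact: computes_succ_of (computes_succ_of (computes_proj 1)).
- move=> i n /=; rewrite /clocked_run /=.
  case: ifP => ltin.
    apply: (computes_ext (computes_succ_of (computes_proj i.+1))) => ys.
    by rewrite nth_slice ltin.
  apply: (computes_ext (computes_succ_of computes_zero)) => ys.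
  by rewrite nth_slice ltin.
- move=> f gs IHf IHgs n; apply: computes_clock_comp (IHf _) (computes_all_map _).
  exact: all_rec_sub IHgs.
- move=> f g IHf IHg [|n]; last exact: computes_clock_prim.
  exact: computes_ext computes_zero _.
- by move=> f IHf n; exact: computes_clock_mu.
Qed.

(** * Dovetailing the computations of a program *)

Fixpoint last_nonzero (e : nat -> nat) j :=
  if j is j'.+1 then (if e j' is 0 then last_nonzero e j' else e j') else 0.

Lemma last_nonzeroP e j v : last_nonzero e j = v.+1 ->
  exists s, [/\ s < j, e s = v.+1 & forall s', s < s' -> s' < j -> e s' = 0].
Proof.
elim: j => //= j IH; case E: (e j) => [|w].
  case/IH => s [ltsj Hs Hlast]; exists s; split=> //; first exact: ltnW.
  by move=> s' lt_ss'; rewrite ltnS leq_eqVlt => /orP [/eqP -> //|]; exact: Hlast.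
move=> <-; exists j; split=> // s' ltjs' ltsj.
by move: (leq_trans ltjs' ltsj); rewrite ltnn.
Qed.

Lemma last_nonzero_pos e j s : e s != 0 -> s < j -> exists v, last_nonzero e j = v.+1.
Proof.
move=> Hs; elim: j => // j IH /=; rewrite ltnS leq_eqVlt => /orP [/eqP <-|/IH].
  by case: (e s) Hs => // w _; exists w.
by case: (e j) => [|w] //; exists w.
Qed.

Section Dovetail.
Variable p : rec.

(* [stage a k] is [v.+1] if [v] is the output of [p] on [(a, s)] for the
   largest [s <= k] on which [p] halts under clock [k], and [0] if there is no
   such [s]. *)
Definition stage a k := last_nonzero (fun s => encode_opt (run k p [:: a; s])) k.+1.

Lemma stage_latest a k v : stage a k = v.+1 ->
  exists s, [/\ s <= k, run k p [:: a; s] = Some v &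
    forall s' w, s' <= k -> run k p [:: a; s'] = Some w -> s' <= s].
Proof.
case/last_nonzeroP => s [ltsk Hs Hlast]; exists s; split=> //.
  by move: Hs; case: (run _ _ _) => // w [->].
move=> s' w les'k Hw; rewrite leqNgt; apply/negP => lt_ss'.
by have := Hlast s' lt_ss' les'k; rewrite Hw.
Qed.

Lemma stage_pos a k s w : s <= k -> run k p [:: a; s] = Some w -> exists v, stage a k = v.+1.
Proof. by move=> lesk Hw; apply: (last_nonzero_pos (s := s)) => //; rewrite Hw. Qed.

Definition stage_prog :=
  let r := rComp (clock p 2) [:: rProj 2; rProj 3; rProj 0] in
  rComp (rPrim rZero (ifz r (rProj 1) r)) [:: succ_of (rProj 0); rProj 0; rProj 1].

Lemma computes_stage_prog : computes stage_prog (fun ys => stage (nth 0 ys 1) (nth 0 ys 0)).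
Proof.
have Hr := computes_comp (computes_clock p 2) (computes_all_cons (computes_proj 2)
  (computes_all_cons (computes_proj 3) (computes_all_cons (computes_proj 0) computes_all_nil))).
apply: (computes_ext (computes_comp_prim computes_zero (computes_ifz Hr (computes_proj 1) Hr)
  (computes_succ_of (computes_proj 0))
  (computes_all_cons (computes_proj 0) (computes_all_cons (computes_proj 1) computes_all_nil)))).
move=> ys; rewrite /stage; set k := nth 0 ys 0; set a := nth 0 ys 1.
by elim: k.+1 => //= j ->; rewrite clocked_run_cons.
Qed.

Definition first_stage_prog := rMu (ifz stage_prog (const_prog 1) rZero).

Lemma eval_first_stage_prog a xs k0 : eval first_stage_prog (a :: xs) k0 <->
  0 < stage a k0 /\ forall m, m < k0 -> stage a m = 0.
Proof.
rewrite eval_mu_total; last exact: computes_ifz computes_stage_prog (computes_const 1)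
  computes_zero.
by rewrite /=; case: (stage a k0) => [|v]; split=> -[] // _ Hm; split=> // m /Hm;
  case: (stage a m).
Qed.

Definition shifted_stage_prog :=
  pred_of (rComp stage_prog [:: rComp add_prog [:: first_stage_prog; rProj 1]; rProj 0]).

Lemma eval_shifted_stage_prog a t n : eval shifted_stage_prog [:: a; t] n <->
  exists k0, [/\ 0 < stage a k0, (forall m, m < k0 -> stage a m = 0) &
    n = (stage a (k0 + t)).-1].
Proof.
pose shift := rComp add_prog [:: first_stage_prog; rProj 1].
have Hshift y : eval shift [:: a; t] y <->
    exists2 k0, eval first_stage_prog [:: a; t] k0 & y = k0 + t.
  apply: eval_comp_partial (eval_add_prog^~ t) _.
  exact: computes_all_cons (computes_proj 1) computes_all_nil.
have Hstage y : eval (rComp stage_prog [:: shift; rProj 0]) [:: a; t] y <->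
    exists2 s, eval shift [:: a; t] s & y = stage a s.
  apply: eval_comp_partial (fun s => computes_stage_prog [:: s; a]) _.
  exact: computes_all_cons (computes_proj 0) computes_all_nil.
rewrite eval_pred_of; split.
- case=> _ /Hstage [_ /Hshift [k0 /eval_first_stage_prog [Hk0 Hmin] ->] ->] ->.
  by exists k0.
- case=> k0 [Hk0 Hmin ->]; exists (stage a (k0 + t)) => //.
  apply/Hstage; exists (k0 + t) => //; apply/Hshift.
  by exists k0 => //; exact/eval_first_stage_prog.
Qed.

End Dovetail.

(** * Maxima of monotone sequences *)

Lemma inl_pmap (T : eqType) (D : Type) (g : T -> option D) (l : seq T) s e :
  s \in l -> g s = Some e -> inl e (pmap g l).
Proof.
elim: l => //= a l IH; rewrite in_cons => /orP [/eqP <- -> /=|Hs He]; first by left.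
by case: (g a) => [y|] /=; [right|]; exact: IH.
Qed.

Section MaxD.
Variables (c : bcomp) (cs : seq bcomp) (D : Type) (lt : D -> D -> Prop).
Local Notation X := (btype c cs).
Hypotheses (lt_irrefl : forall d, ~ lt d d)
  (lt_trans : forall d e g, lt d e -> lt e g -> lt d g).

Lemma leD_antisym d e : leD lt d e -> leD lt e d -> d = e.
Proof. by case=> [lt_de [lt_ed|->]|->] //; case: (lt_irrefl (lt_trans lt_de lt_ed)). Qed.

Lemma leD_trans d e g : leD lt d e -> leD lt e g -> leD lt d g.
Proof. by case=> [lt_de [lt_eg|<-]|->] //; left; [exact: lt_trans lt_de lt_eg|]. Qed.

Lemma mono2_vals_finite (f : X -> nat -> option D) x s d : mono2 lt f ->
  f x s = Some d -> (forall e, vals f x e -> leD lt e d) ->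
  exists l : seq D, forall e, vals f x e -> inl e l.
Proof.
move=> f_mono Hd d_max; exists (pmap (f x) (iota 0 s.+1)) => e [s' Hs'].
case: (leqP s' s) => [les's|lt_ss'].
  by apply: inl_pmap Hs'; rewrite mem_iota add0n ltnS.
have <- : d = e.
  by apply: leD_antisym (f_mono _ _ _ _ _ (ltnW lt_ss') Hd Hs') (d_max _ _); exists s'.
by apply: inl_pmap Hd; rewrite mem_iota add0n ltnS leqnn.
Qed.

Lemma is_maxD_cofinal (f g : X -> nat -> option D) F : mono2 lt f ->
  (forall x e, vals g x e -> vals f x e) ->
  (forall x e, vals f x e -> exists2 e', vals g x e' & leD lt e e') ->
  is_maxD lt f F -> is_maxD lt g F.
Proof.
move=> f_mono g_f f_g f_max x d; rewrite f_max; split.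
- case=> [[l Hl] f_d d_max]; split.
  + by exists l => e /g_f /Hl.
  + case: (f_g _ _ f_d) => e' g_e' le_de'.
    by rewrite (leD_antisym le_de' (d_max _ (g_f _ _ g_e'))).
  + by move=> e /g_f /d_max.
- case=> [_ g_d d_max]; have [s Hs] := g_f _ _ g_d.
  have f_le_d e : vals f x e -> leD lt e d.
    by case/f_g => e' /d_max le_e'd le_ee'; exact: leD_trans le_ee' le_e'd.
  by split=> //; [exact: mono2_vals_finite Hs f_le_d | exists s].
Qed.

End MaxD.

Section Restrict.
Variables (c : bcomp) (cs : seq bcomp) (D : Type) (lt : D -> D -> Prop) (rho : nat -> D).
Local Notation X := (btype c cs).
Variable Z : X -> Prop.

Definition restrict (g : X -> nat -> option D) x t :=
  if excluded_middle_informative (Z x) then g x t else None.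

Lemma restrict_defined g x t : restrict g x t <> None <-> Z x /\ g x t <> None.
Proof. by rewrite /restrict; case: excluded_middle_informative; split=> // -[]. Qed.

Lemma pcomp2_restrict g : pcomp2 rho g -> sigma01 Z -> pcomp2 rho (restrict g).
Proof.
case=> pg pg_g [pZ pZ_Z].
exists (rComp (rProj 0) [:: pg; rComp pZ [:: rProj 0]]) => x t n; split.
- case/eval_comp_inv => _ [/evals2_inv [m [v [-> Hm Hv]]] /eval_proj_inv /= ->].
  case/eval_comp_inv: Hv => ys [/evals_cons_inv [y [ys' [-> /eval_proj_inv -> /evals_nil_inv ->]]] /= Hv].
  rewrite /restrict; case: excluded_middle_informative => [HZ|nZ] /=; first exact/pg_g.
  by case: nZ; apply/pZ_Z; exists v.
- rewrite /restrict; case: excluded_middle_informative => // /pZ_Z [v Hv] /pg_g Hn.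
  have HZ : eval (rComp pZ [:: rProj 0]) [:: bcode x; t] v.
    exact: eComp (esCons (eProj 0 [:: bcode x; t]) (esNil _)) Hv.
  exact: eComp (esCons Hn (esCons HZ (esNil _))) (eProj 0 [:: n; v]).
Qed.

Lemma mono2_restrict g : mono2 lt g -> mono2 lt (restrict g).
Proof.
by move=> g_mono x t t' d d'; rewrite /restrict; case: excluded_middle_informative => // HZ; exact: g_mono.
Qed.

Lemma is_maxD_restrict g F : is_maxD lt g F -> (forall x, ~ Z x -> F x = None) ->
  is_maxD lt (restrict g) F.
Proof.
move=> g_max F_Z x d; rewrite /restrict /vals.
case: excluded_middle_informative => [HZ|nZ]; first exact: g_max.
by rewrite F_Z //; split=> // -[_ []].
Qed.

End Restrict.

Section DovetailSemantics.
Variables (c : bcomp) (cs : seq bcomp) (D : Type) (lt : D -> D -> Prop) (rho : nat -> D).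
Local Notation X := (btype c cs).
Hypotheses (lt_irrefl : forall d, ~ lt d d)
  (lt_trans : forall d e g, lt d e -> lt e g -> lt d g) (rho_bij : bijective rho).
Variables (p : rec) (f : X -> nat -> option D).
Hypotheses (p_f : forall x t n, eval p [:: bcode x; t] n <-> f x t = Some (rho n))
  (f_mono : mono2 lt f).

Definition started (x : X) := exists k, 0 < stage p (bcode x) k.

Definition dovetail (x : X) t : option D :=
  match excluded_middle_informative (started x) with
  | left Hx => Some (rho (stage p (bcode x) (ex_minn Hx + t)).-1)
  | right _ => None
  end.

Lemma first_stageE (x : X) (Hx : started x) k0 :
  (0 < stage p (bcode x) k0 /\ forall m, m < k0 -> stage p (bcode x) m = 0) <-> k0 = ex_minn Hx.
Proof.
case: ex_minnP => m Hm m_min; split.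
- case=> Hk0 k0_min; apply/eqP; rewrite eqn_leq m_min // andbT leqNgt.
  by apply/negP => /k0_min; move: Hm => /[swap] ->.
- move=> ->; split=> // j ltjm; move: (m_min j); case: (stage _ _ j) => // w /(_ isT).
  by rewrite leqNgt ltjm.
Qed.

Lemma stage_value (x : X) K v : stage p (bcode x) K = v.+1 ->
  exists s, [/\ s <= K, run K p [:: bcode x; s] = Some v, f x s = Some (rho v) &
    forall s' w, s' <= K -> run K p [:: bcode x; s'] = Some w -> s' <= s].
Proof.
case/stage_latest => s [lesK Hs Hlast]; exists s; split=> //.
exact/p_f/(run_sound Hs).
Qed.

Lemma stage_dominates (x : X) K s w : s <= K -> run K p [:: bcode x; s] = Some w ->
  exists v, stage p (bcode x) K = v.+1 /\ leD lt (rho w) (rho v).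
Proof.
move=> lesK Hw; case: (stage_pos lesK Hw) => v Hv; exists v; split=> //.
case: (stage_value Hv) => s' [_ _ Hs' s'_last].
exact: f_mono (s'_last _ _ lesK Hw) (proj1 (p_f _ _ _) (run_sound Hw)) Hs'.
Qed.

Lemma stage_started (x : X) (Hx : started x) K : ex_minn Hx <= K ->
  exists v, stage p (bcode x) K = v.+1.
Proof.
case: ex_minnP => m; case E: (stage _ _ m) => [|v] // _ _ lemK.
case: (stage_value E) => s [lesm Hs _ _].
by case: (stage_dominates (leq_trans lesm lemK) (run_monotone lemK Hs)) => v' [Hv' _]; exists v'.
Qed.

Lemma dovetail_vals (x : X) e : vals dovetail x e -> vals f x e.
Proof.
case=> t; rewrite /dovetail; case: excluded_middle_informative => // Hx [<-].
case: (stage_started (leq_addr t (ex_minn Hx))) => v Hv.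
by case: (stage_value Hv) => s [_ _ Hs _]; exists s; rewrite Hv.
Qed.

Lemma dovetail_cofinal (x : X) e : vals f x e -> exists2 e', vals dovetail x e' & leD lt e e'.
Proof.
case=> s; case: rho_bij => rho_inv _ rhoK; rewrite -[e]rhoK => /p_f /run_complete [k Hk].
have Hk' := run_monotone (leq_maxl k s) Hk.
rewrite /vals /dovetail; case: excluded_middle_informative => [Hx|nx]; last first.
  by case: (stage_pos (leq_maxr k s) Hk') => v Hv; case: nx; exists (maxn k s); rewrite Hv.
have leK : maxn k s <= ex_minn Hx + maxn k s := leq_addl _ _.
case: (stage_dominates (leq_trans (leq_maxr k s) leK) (run_monotone leK Hk')) => v [Hv le_ev].
by exists (rho v) => //; exists (maxn k s); rewrite Hv.
Qed.

Lemma dovetail_defined (x : X) t : dovetail x t <> None <-> started x.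
Proof. by rewrite /dovetail; case: excluded_middle_informative. Qed.

Lemma started_of_vals (x : X) e : vals f x e -> started x.
Proof. by case/dovetail_cofinal => e' [t Ht] _; apply/(dovetail_defined x t); rewrite Ht. Qed.

Lemma dovetail_mono : mono2 lt dovetail.
Proof.
move=> x t t' d d' le_tt'; rewrite /dovetail.
case: excluded_middle_informative => // Hx [<-] [<-].
have le_stages : ex_minn Hx + t <= ex_minn Hx + t' by rewrite leq_add2l.
case: (stage_started (leq_addr t (ex_minn Hx))) => v Hv.
case: (stage_value Hv) => s [lesK Hs _ _].
case: (stage_dominates (leq_trans lesK le_stages) (run_monotone le_stages Hs)) => v' [Hv' le_vv'].
by rewrite Hv Hv'.
Qed.

Lemma pcomp2_dovetail : pcomp2 rho dovetail.
Proof.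
exists (shifted_stage_prog p) => x t n; rewrite eval_shifted_stage_prog /dovetail.
case: excluded_middle_informative => [Hx|nx]; split.
- by case=> k0 [Hk0 k0_min ->]; rewrite ((first_stageE Hx k0).1 (conj Hk0 k0_min)).
- case=> /(bij_inj rho_bij) <-; exists (ex_minn Hx).
  by have [Hk0 k0_min] := (first_stageE Hx _).2 erefl.
- by case=> k0 [Hk0 _ _]; case: nx; exists k0.
- by [].
Qed.

Lemma sigma01_started : sigma01 started.
Proof.
exists (first_stage_prog p) => x; split.
- by move=> Hx; exists (ex_minn Hx); apply/eval_first_stage_prog; exact: (first_stageE Hx _).2.
- by case=> k0 /eval_first_stage_prog [Hk0 _]; exists k0.
Qed.

Lemma is_maxD_dovetail F : is_maxD lt f F -> is_maxD lt dovetail F.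
Proof.
by apply: (is_maxD_cofinal lt_irrefl lt_trans f_mono) => x e;
  [exact: dovetail_vals | exact: dovetail_cofinal].
Qed.

End DovetailSemantics.

Theorem mainTheorem14 (c : bcomp) (cs : seq bcomp)
  (D : Type) (lt : D -> D -> Prop) (rho : nat -> D) :
  is_comp_poset lt rho ->
  forall F : btype c cs -> option D, MaxPR lt rho F ->
  (exists (f : btype c cs -> nat -> option D) (Z : btype c cs -> Prop),
     [/\ pcomp2 rho f, mono2 lt f, is_maxD lt f F, sigma01 Z &
         forall x t, f x t <> None <-> Z x])
  /\
  (sigma01 (fun x : btype c cs => F x <> None) ->
   exists f : btype c cs -> nat -> option D,
     [/\ pcomp2 rho f, mono2 lt f, is_maxD lt f F &
         forall x t, f x t <> None <-> F x <> None]).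
Proof.
case=> lt_irrefl lt_trans rho_bij _ F [f [[p p_f] f_mono f_max]].
have dovetail_max := is_maxD_dovetail lt_irrefl lt_trans rho_bij p_f f_mono f_max.
split.
  exists (dovetail rho p), (started p); split=> //.
  - exact: pcomp2_dovetail.
  - exact: dovetail_mono.
  - exact: sigma01_started.
  - exact: dovetail_defined.
move=> domF_sigma01.
exists (restrict (fun x => F x <> None) (dovetail rho p)); split.
- exact: pcomp2_restrict (pcomp2_dovetail _ _ rho_bij p) domF_sigma01.
- exact/mono2_restrict/dovetail_mono.
- by apply: (is_maxD_restrict dovetail_max) => x; case: (F x) => // d [].
- move=> x t; rewrite restrict_defined; split=> [[] //|HFx]; split=> //.
  apply/(dovetail_defined rho p x t).
  by case E: (F x) HFx => [d|] // _; case/f_max: E => _ /(started_of_vals rho_bij p_f f_mono).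
Qed.
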